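(* For positive integers $m\le n$, the complete bipartite graph $K_{m,n}$ satisfies $IDI(K_{m,n})=n$ if $m<n$, and $IDI(K_{m,n})=n+1$ if $m=n$.
   Context: For a finite simple connected graph $G=(V,E)$ with diameter $d$, a rank assignment is a function $f:V\to\mathbb{R}$; under $f$, the string of a vertex $v$ is the $d$-vector whose $i$-th coordinate is the sum of $f(w)$ over all vertices $w$ with $d(v,w)=i$. The ID-index $IDI(G)$ is the minimum $k$ such that there exists $f:V\to\mathbb{R}$ with $|f(V)|=k$ under which all vertices have distinct strings. *)

From HB Require Import structures.
From mathcomp Require Import all_boot all_order all_algebra.
From Stdlib Require Import Rdefinitions.
From mathcomp Require Import Rstruct.
Set Implicit Arguments. Unset Strict Implicit. Unset Printing Implicit Defensive.
Import Order.TTheory GRing.Theory Num.Theory.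

(* A finite simple graph: vertex finType T with symmetric irreflexive e : rel T. *)

Local Open Scope ring_scope.
Section Graph.
Variables (T : finType) (e : rel T).

Fixpoint ball (k : nat) (x : T) : {set T} :=
  match k with
  | 0 => [set x]
  | k'.+1 => ball k' x :|: [set y | [exists z in ball k' x, e z y]]
  end.

(* graph distance: the least k with y in ball k x (for connected graphs
   this is < #|T|; default #|T| if unreachable) *)
Definition gdist (x y : T) : nat := find (fun k => y \in ball k x) (iota 0 #|T|).

Definition diameter : nat := \max_(x : T) \max_(y : T) gdist x y.

Definition vstring (f : T -> R) (v : T) : seq R :=
  [seq \sum_(w : T | gdist v w == i) f w | i <- iota 1 diameter].

Definition num_values (f : T -> R) : nat := size (undup [seq f v | v <- enum T]).

Definition distinguishing (f : T -> R) : Prop := injective (vstring f).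

Definition is_IDI (k : nat) : Prop :=
  (exists f : T -> R, distinguishing f /\ num_values f = k) /\
  (forall f : T -> R, distinguishing f -> leq k (num_values f)).
End Graph.

Definition Kmn_rel (m n : nat) : rel ('I_m + 'I_n)%type :=
  fun x y => match x, y with
             | inl _, inr _ | inr _, inl _ => true
             | _, _ => false
             end.

(* In K_{m,n} distinct vertices are at distance 1 (opposite sides) or 2 (same
   side), so the string of a vertex v is (sum of f over the other side, sum of f
   over the side of v minus f v), padded with zeros.  Hence f distinguishes the
   vertices iff it is injective on each side and the two side sums differ as
   soon as some value is taken on both sides.  Injectivity on the larger side
   forces n values.  If m = n and only n values occur, both sides take exactly
   the same n values, so the side sums agree and a shared value collides.  The
   ranks i+1 on the left and j+1 (plus one when m = n) on the right reach these
   bounds, because the right side sum exceeds the left one. *)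

From HB Require Import structures.
From mathcomp Require Import all_boot all_order all_algebra.
From Stdlib Require Import Rdefinitions.
From mathcomp Require Import Rstruct.
Set Implicit Arguments. Unset Strict Implicit. Unset Printing Implicit Defensive.
Import Order.TTheory GRing.Theory Num.Theory.

Section Distance.
Variables (T : finType) (e : rel T).

Lemma in_ball0 x y : (y \in ball e 0 x) = (y == x).
Proof. by rewrite inE. Qed.

Lemma in_ballS k x y :
  (y \in ball e k.+1 x) = (y \in ball e k x) || [exists z in ball e k x, e z y].
Proof. by rewrite /= !inE. Qed.

Lemma in_ball1 x y : (y \in ball e 1 x) = (y == x) || e x y.
Proof.
rewrite in_ballS in_ball0; congr (_ || _); apply/existsP/idP => [[z]|exy].
  by rewrite in_ball0 => /andP[/eqP ->].
by exists x; rewrite in_ball0 eqxx.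
Qed.

Lemma gdist_eq k x y : k < #|T| -> y \in ball e k x ->
  (forall j, j < k -> y \notin ball e j x) -> gdist e x y = k.
Proof.
move=> ltkT yk ynj; rewrite /gdist; set p := fun j => y \in ball e j x.
have hasp : has p (iota 0 #|T|) by apply/hasP; exists k; rewrite ?mem_iota.
have := has_find p (iota 0 #|T|); rewrite hasp size_iota => /esym lt_find.
case: (ltngtP (find p (iota 0 #|T|)) k) => // [lt_fk | lt_kf].
  have := nth_find 0 hasp; rewrite nth_iota // add0n.
  by rewrite /p (negbTE (ynj _ lt_fk)).
by have := before_find 0 lt_kf; rewrite nth_iota // add0n /p yk.
Qed.

Lemma gdist_le_diameter x y : gdist e x y <= diameter e.
Proof. exact: leq_trans (leq_bigmax y) (leq_bigmax x). Qed.

Lemma is_IDI_intro k f : distinguishing e f -> num_values f <= k ->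
  (forall g, distinguishing e g -> k <= num_values g) -> is_IDI e k.
Proof.
move=> dist_f le_fk min_k; split=> //; exists f; split=> //.
by apply/eqP; rewrite eqn_leq le_fk min_k.
Qed.

Local Open Scope ring_scope.

Definition sphere_sum (f : T -> R) v i : R := \sum_(w | gdist e v w == i) f w.

Lemma sphere_sum_eq0 f v i :
  (forall w, (gdist e v w < i)%nat) -> sphere_sum f v i = 0.
Proof. by move=> lt_i; rewrite /sphere_sum big_pred0 // => w; rewrite ltn_eqF. Qed.

Lemma vstring_eqP f x y : vstring e f x = vstring e f y <->
  (forall i, (0 < i)%nat -> sphere_sum f x i = sphere_sum f y i).
Proof.
rewrite -[vstring e f x]/(map (sphere_sum f x) _).
rewrite -[vstring e f y]/(map (sphere_sum f y) _) -eq_in_map.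
split=> [eq_s i i_gt0 | eq_s i]; last first.
  by rewrite mem_iota => /andP[/eq_s].
case: (leqP i (diameter e)) => [le_id | lt_di].
  by apply: eq_s; rewrite mem_iota i_gt0 add1n ltnS.
by rewrite !sphere_sum_eq0 // => w; apply: leq_ltn_trans (gdist_le_diameter _ _) lt_di.
Qed.

End Distance.

Section Values.
Variables (T : finType) (f : T -> R).

Definition values : seq R := undup [seq f v | v <- enum T].

Lemma mem_values v : f v \in values.
Proof. by rewrite mem_undup map_f ?mem_enum. Qed.

Lemma num_values_le (s : seq R) : (forall v, f v \in s) -> num_values f <= size s.
Proof.
move=> f_s; apply: uniq_leq_size (undup_uniq _) _ => x.
by rewrite mem_undup => /mapP[v _ ->].
Qed.

Variables (S : finType) (g : S -> T).
Hypothesis inj_fg : injective (f \o g).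

Lemma num_values_ge : #|S| <= num_values f.
Proof.
rewrite cardE -(size_map (f \o g)); apply: uniq_leq_size.
  by rewrite map_inj_uniq ?enum_uniq.
by move=> x /mapP[s _ ->]; exact: mem_values.
Qed.

Lemma perm_values : num_values f <= #|S| -> perm_eq [seq f (g s) | s <- enum S] values.
Proof.
move=> le_fS; have uniq_fg : uniq [seq f (g s) | s <- enum S].
  by rewrite (map_inj_uniq inj_fg) enum_uniq.
have sub : {subset [seq f (g s) | s <- enum S] <= values}.
  by move=> x /mapP[s _ ->]; exact: mem_values.
have le_size : size values <= size [seq f (g s) | s <- enum S].
  by rewrite size_map -cardE.
have [_ eq_fg] := uniq_min_size uniq_fg sub le_size.
exact: uniq_perm (undup_uniq _) eq_fg.
Qed.

Local Open Scope ring_scope.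

Lemma sum_values : (num_values f <= #|S|)%nat -> \sum_s f (g s) = \sum_(x <- values) x.
Proof. by move/perm_values/(perm_big _) <-; rewrite big_map big_enum. Qed.

End Values.

Section CompleteBipartite.
Variables (m n : nat) (m_gt0 : 0 < m) (n_gt0 : 0 < n).
Local Notation T := ('I_m + 'I_n)%type.
Local Notation e := (@Kmn_rel m n).

Lemma Kmn_irrefl : irreflexive e.
Proof. by case. Qed.

Lemma Kmn_common_neighbour x y : ~~ e x y -> exists z, e x z && e z y.
Proof.
case: x => a; case: y => b //= _.
  by exists (inr (Ordinal n_gt0)).
by exists (inl (Ordinal m_gt0)).
Qed.

Lemma gdist_Kmn x y : gdist e x y = if x == y then 0 else if e x y then 1 else 2.
Proof.
have [<- | neq_xy] := eqVneq x y.
  by apply: gdist_eq; rewrite ?in_ball0 //; apply/card_gt0P; exists x.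
have neq_yx : y != x by rewrite eq_sym.
have T_gt1 : 1 < #|{: T}| by apply/card_gt1P; exists x, y.
case: ifP => [exy | /negbT nexy].
  by apply: gdist_eq; rewrite ?in_ball1 ?exy ?orbT // => -[|//] _; rewrite in_ball0.
have [z /andP[exz ezy]] := Kmn_common_neighbour nexy.
have neq_yz : y != z by apply: contraTneq ezy => ->; rewrite Kmn_irrefl.
have neq_zx : z != x by apply: contraTneq exz => ->; rewrite Kmn_irrefl.
have T_gt2 : 2 < #|{: T}| by apply/card_gt2P; exists x, y, z.
apply: gdist_eq => //.
  rewrite in_ballS; apply/orP; right; apply/existsP.
  by exists z; rewrite in_ball1 exz ezy orbT.
by case=> [|[|]] // _; rewrite ?in_ball0 ?in_ball1 (negbTE neq_yx) ?(negbTE nexy).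
Qed.

Lemma gdist_Kmn_le2 x y : gdist e x y <= 2.
Proof. by rewrite gdist_Kmn; case: ifP => //; case: ifP. Qed.

Local Open Scope ring_scope.
Implicit Types f : T -> R.

Definition left_sum f := \sum_(i < m) f (inl i).
Definition right_sum f := \sum_(j < n) f (inr j).

Definition Kmn_profile f v : R * R :=
  match v with
  | inl _ => (right_sum f, left_sum f - f v)
  | inr _ => (left_sum f, right_sum f - f v)
  end.

Lemma sphere_sums_Kmn f v : (sphere_sum e f v 1, sphere_sum e f v 2) = Kmn_profile f v.
Proof.
have dist w i :
    (gdist e v w == i) = ((if v == w then 0 else if e v w then 1 else 2)%nat == i).
  by rewrite gdist_Kmn.
rewrite /sphere_sum !(eq_bigl _ _ (dist^~ _)).
have sum_neq (I : finType) (F : I -> R) a : \sum_(i | i != a) F i = \sum_i F i - F a.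
  by rewrite [X in _ = X - _](bigD1 a) //= addrAC subrr add0r.
have if_eq1 (b : bool) : ((if b then 0 else 2)%nat == 1) = false by case: b.
have if_eq2 (b : bool) : ((if b then 0 else 2)%nat == 2) = ~~ b by case: b.
case: v {dist} => a; rewrite !big_sumType /=; congr (_, _).
- by rewrite big_pred0 ?add0r // => i; rewrite if_eq1.
- rewrite [X in _ + X]big_pred0 // addr0 /left_sum -(sum_neq _ _ a).
  by apply: eq_bigl => i; rewrite if_eq2 eq_sym.
- by rewrite [X in _ + X]big_pred0 ?addr0 // => i; rewrite if_eq1.
- rewrite big_pred0 // add0r /right_sum -(sum_neq _ _ a).
  by apply: eq_bigl => i; rewrite if_eq2 eq_sym.
Qed.

Lemma Kmn_distinguishingP f : distinguishing e f <-> injective (Kmn_profile f).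
Proof.
suff eq_vstring x y : vstring e f x = vstring e f y <-> Kmn_profile f x = Kmn_profile f y.
  by split=> inj x y /eq_vstring /inj.
rewrite vstring_eqP -!sphere_sums_Kmn; split=> [eq_s | [eq1 eq2] [|[|[|i]]] //= _].
  by rewrite !eq_s.
by rewrite !sphere_sum_eq0 // => w; exact: leq_ltn_trans (gdist_Kmn_le2 _ _) _.
Qed.

Lemma Kmn_profile_injP f : injective (Kmn_profile f) <->
  [/\ injective (f \o inl), injective (f \o inr) &
      forall i j, f (inl i) = f (inr j) -> left_sum f != right_sum f].
Proof.
split=> [inj_p | [injL injR sep] [a|a] [b|b] /pair_equal_spec[eq1 eq2]].
- split=> [a b /= eq_f | a b /= eq_f | a b eq_f].
  + by have /= := inj_p (inl a) (inl b); rewrite eq_f => /(_ erefl) [].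
  + by have /= := inj_p (inr a) (inr b); rewrite eq_f => /(_ erefl) [].
  + apply/eqP=> eq_s; have /= := inj_p (inl a) (inr b).
    by rewrite eq_f eq_s => /(_ erefl).
- by rewrite (injL a b) //; exact: subrI eq2.
- by rewrite eq1 in eq2; have := sep a b (subrI _ eq2); rewrite eq1 eqxx.
- by rewrite eq1 in eq2; have := sep b a (esym (subrI _ eq2)); rewrite eq1 eqxx.
- by rewrite (injR a b) //; exact: subrI eq2.
Qed.

Lemma Kmn_num_values_ge f : distinguishing e f -> (n <= num_values f)%nat.
Proof.
case/Kmn_distinguishingP/Kmn_profile_injP => _ injR _.
by have := num_values_ge injR; rewrite card_ord.
Qed.

Lemma Kmn_num_values_gt f : m = n -> distinguishing e f -> (n < num_values f)%nat.
Proof.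
move=> eq_mn /[dup] /Kmn_num_values_ge; rewrite leq_eqVlt => /orP[/eqP eq_nv|//].
case/Kmn_distinguishingP/Kmn_profile_injP => injL injR sep.
have le_L : (num_values f <= #|'I_m|)%nat by rewrite card_ord -eq_nv eq_mn.
have le_R : (num_values f <= #|'I_n|)%nat by rewrite card_ord -eq_nv.
have eq_sums : left_sum f = right_sum f.
  by rewrite /left_sum /right_sum (sum_values injL le_L) (sum_values injR le_R).
have := mem_values f (inl (Ordinal m_gt0)).
rewrite -(perm_mem (perm_values injR le_R)) => /mapP[j _ eq_f].
by have := sep _ _ eq_f; rewrite eq_sums eqxx.
Qed.

Hypothesis le_mn : (m <= n)%nat.

Definition Kmn_rank (v : T) : R :=
  match v with inl i => i.+1%:R | inr j => (j.+1 + (m == n))%:R end.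

Lemma Kmn_rank_num_values : (num_values Kmn_rank <= n + (m == n))%nat.
Proof.
rewrite -(size_iota 1 (n + (m == n))) -(size_map (fun k => k%:R : R)).
apply: num_values_le => -[i|j]; apply/mapP.
  exists i.+1; rewrite // mem_iota add1n ltnS /=.
  exact/ltn_addr/(leq_trans (ltn_ord i)).
exists (j.+1 + (m == n))%nat; rewrite // mem_iota add1n ltnS.
by rewrite leq_add2r ltn_ord andbT addSn.
Qed.

Lemma Kmn_rank_sums_lt : left_sum Kmn_rank < right_sum Kmn_rank.
Proof.
rewrite /left_sum /right_sum -!natr_sum ltr_nat big_split /= sum_nat_const card_ord.
have [<- | neq_mn] := eqVneq m n.
  by rewrite muln1 -[X in (X < _)%nat]addn0 ltn_add2l.
have sum_succ_homo : {homo (fun k => \sum_(i < k) i.+1) : j k / (j < k)%nat}.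
  apply: homo_ltn => [y x z|k]; first exact: ltn_trans.
  by rewrite big_ord_recr /= -[X in (X < _)%nat]addn0 ltn_add2l.
by rewrite muln0 addn0 sum_succ_homo // ltn_neqAle neq_mn.
Qed.

Lemma Kmn_rank_distinguishing : distinguishing e Kmn_rank.
Proof.
apply/Kmn_distinguishingP/Kmn_profile_injP; split=> [i i'|j j'|i j _].
- by move/eqP; rewrite /= eqr_nat eqSS => /eqP/val_inj.
- by move/eqP; rewrite /= eqr_nat eqn_add2r eqSS => /eqP/val_inj.
- by rewrite lt_eqF // Kmn_rank_sums_lt.
Qed.

End CompleteBipartite.

Theorem mainTheorem13 (m n : nat) (hm : 0 < m) (hmn : m <= n) :
  (m < n -> is_IDI (@Kmn_rel m n) n) /\
  (m = n -> is_IDI (@Kmn_rel m n) n.+1).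
Proof.
have hn : 0 < n := leq_trans hm hmn.
have rank_dist := Kmn_rank_distinguishing hm hn hmn.
have rank_values := Kmn_rank_num_values hmn.
split=> [lt_mn | eq_mn]; apply: (is_IDI_intro rank_dist).
- by rewrite (ltn_eqF lt_mn) addn0 in rank_values.
- by move=> g; apply: Kmn_num_values_ge.
- by rewrite (introT eqP eq_mn) addn1 in rank_values.
- by move=> g; apply: Kmn_num_values_gt.
Qed.
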